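(* Let $U$ be a finite set, and let $S_1,S_2,\dots,S_{2^{|U|}}$ be any ordering of all subsets of $U$. For nonempty $V\subseteq U$ define $V^0=V$ and, for $r\ge0$, $V^{r+1}=V^r\setminus S_{r+1}$ if $S_{r+1}$ crosses $V^r$ and $V^{r+1}=V^r$ otherwise; the final set $V^{2^{|U|}}$ is a singleton $\{p\}$, and we say ''$p$ is last in $V$''. Then for any sets $T\subseteq V\subseteq U$ and any point $p\in V\setminus T$: if $p$ is last in $V$, then $p$ is last in $V\setminus T$.
   Context: A set $A$ crosses a set $B$ if both $B\cap A$ and $B\setminus A$ are nonempty. In the paper the ordering arises randomly: given weights $z_S\ge0$ for $S\subseteq U$, independent exponential random variables $X_S\sim\exp(z_S)$ are drawn for sets with $z_S>0$, sets are ordered by increasing $X_S$, and sets with $z_S=0$ are appended in a fixed arbitrary order; the statement holds for every outcome of this ordering. *)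

From mathcomp Require Import all_boot.
Set Implicit Arguments. Unset Strict Implicit. Unset Printing Implicit Defensive.

Definition crosses (U : finType) (A B : {set U}) : bool :=
  (B :&: A != set0) && (B :\: A != set0).

Definition is_ordering (U : finType) (s : seq {set U}) : Prop :=
  uniq s /\ (forall S : {set U}, S \in s).

Definition refine_step (U : finType) (V S : {set U}) : {set U} :=
  if crosses S V then V :\: S else V.

Definition final_set (U : finType) (s : seq {set U}) (V : {set U}) : {set U} :=
  foldl (@refine_step U) V s.

Definition last_in (U : finType) (s : seq {set U}) (V : {set U}) (p : U) : Prop :=
  final_set s V = [set p].

From mathcomp Require Import all_boot.
Set Implicit Arguments. Unset Strict Implicit. Unset Printing Implicit Defensive.

(* Run the refinement on V and on a subset X containing p side by side.
   As long as p survives in the run on V, the run on X stays inside it and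
   keeps p: a set crossing the smaller current set also crosses the larger
   one, so p (which survives) lies outside it; and if a set S is removed from
   the larger current set but not from the smaller one, then S cannot meet
   the smaller one, since the latter also contains p, which is not in S.
   Hence the final set for X is a subset of {p} containing p. *)

Section Refinement.

Variable U : finType.
Implicit Types (S W X : {set U}) (s : seq {set U}) (p : U).

Lemma crossesS S X W : X \subset W -> crosses S X -> crosses S W.
Proof.
move=> sXW /andP[/set0Pn[x xXS] /set0Pn[y yXS]].
apply/andP; split; apply/set0Pn.
- by exists x; apply: subsetP xXS; exact: setSI.
- by exists y; apply: subsetP yXS; exact: setSD.
Qed.

Lemma mem_refine_step S W p :
  (p \in refine_step W S) = (p \in W) && ~~ (crosses S W && (p \in S)).
Proof.
rewrite /refine_step; case: (crosses S W); last by rewrite andbT.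
by rewrite inE andbC.
Qed.

Lemma refine_step_subset S W : refine_step W S \subset W.
Proof. by apply/subsetP => x; rewrite mem_refine_step => /andP[]. Qed.

Lemma final_set_subset s W : final_set s W \subset W.
Proof.
elim: s W => [|S s IHs] W /=; first exact: subxx.
exact: subset_trans (IHs _) (refine_step_subset S W).
Qed.

Lemma mem_refine_step_subset S X W p :
  X \subset W -> p \in X -> p \in refine_step W S -> p \in refine_step X S.
Proof.
move=> sXW pX; rewrite !mem_refine_step pX => /andP[_]; apply: contra.
by case/andP=> /(crossesS sXW) -> ->.
Qed.

Lemma refine_stepS S X W p :
  X \subset W -> p \in X -> p \in refine_step W S ->
  refine_step X S \subset refine_step W S.
Proof.
move=> sXW pX; rewrite mem_refine_step => /andP[_ p_kept].
apply/subsetP => x; rewrite !mem_refine_step => /andP[xX x_kept].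
rewrite (subsetP sXW) //=; apply: contraNN x_kept => /andP[cSW xS].
have pNS : p \notin S by apply: contraNN p_kept; rewrite cSW.
apply/andP; split; last exact: xS.
by apply/andP; split; apply/set0Pn; [exists x | exists p];
  rewrite !inE ?xX ?xS ?pX ?pNS.
Qed.

Lemma final_setS s X W p :
  X \subset W -> p \in X -> p \in final_set s W ->
  (p \in final_set s X) && (final_set s X \subset final_set s W).
Proof.
elim: s X W => [|S s IHs] X W sXW pX pW /=; first by rewrite pX sXW.
have pSW : p \in refine_step W S := subsetP (final_set_subset s _) p pW.
apply: IHs pW.
- exact: refine_stepS pSW.
- exact: mem_refine_step_subset pSW.
Qed.

End Refinement.

Theorem lemma2p4 (U : finType) (s : seq {set U}) (T V : {set U}) (p : U) :
  is_ordering s ->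
  T \subset V ->
  p \in V :\: T ->
  last_in s V p ->
  last_in s (V :\: T) p.
Proof.
move=> _ _ pVT; rewrite /last_in => lastV.
have pV : p \in final_set s V by rewrite lastV set11.
case/andP: (final_setS (subsetDl V T) pVT pV); rewrite lastV => pVT_last sub_p.
by apply/eqP; rewrite eqEsubset sub_p sub1set pVT_last.
Qed.
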